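(* Let $p\ge 1$, let $k_i,k_j>0$ be real numbers, and let $A,B$ be real symmetric $p\times p$ matrices. Consider the optimization problem \[ \max_{Y\in\mathbb{S}_+^p}\; k_i\log\det\Big(A-\tfrac{1}{k_i}Y\Big)+k_j\log\det\Big(B+\tfrac{1}{k_j}Y\Big)\quad\text{subject to}\quad -k_jB\prec Y\prec k_iA . \] Suppose this problem is feasible, i.e. there exists $Y\in\mathbb{S}_+^p$ with $-k_jB\prec Y\prec k_iA$. Then $A\succ O$, and an optimal solution of the problem is \[ Y^\ast=\frac{k_ik_j}{k_i+k_j}\,A^{1/2}\,\mathrm{proj}_{\mathbb{S}_+^p}\Big(I-A^{-1/2}BA^{-1/2}\Big)\,A^{1/2}. \]
   Context: $\mathbb{S}_+^p$ denotes the set of real symmetric positive semi-definite $p\times p$ matrices. For symmetric matrices $X,Y$, $X\preceq Y$ means $Y-X$ is positive semi-definite and $X\prec Y$ means $Y-X$ is positive definite; $O$ is the zero matrix and $I$ the identity. $A^{1/2}$ is the symmetric positive definite square root and $A^{-1/2}$ its inverse. $\mathrm{proj}_{\mathbb{S}_+^p}$ is the Frobenius-norm orthogonal projection onto $\mathbb{S}_+^p$ (for a symmetric matrix with eigen-decomposition $U\mathrm{diag}(\lambda)U^{\mathsf T}$ it equals $U\mathrm{diag}(\max(\lambda,0))U^{\mathsf T}$). *)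

From HB Require Import structures.
From mathcomp Require Import all_boot all_order all_algebra.
From mathcomp Require Import classical_sets boolp reals exp.
Set Implicit Arguments. Unset Strict Implicit. Unset Printing Implicit Defensive.
Import Order.TTheory GRing.Theory Num.Theory.
Local Open Scope ring_scope.
Local Open Scope classical_set_scope.

Section Defs.
Variable R : realType.
Variable p : nat.

Definition sym_mx (M : 'M[R]_p) : Prop := M^T = M.

Definition qform (M : 'M[R]_p) (x : 'cV[R]_p) : R := (x^T *m M *m x) 0 0.

Definition psd (M : 'M[R]_p) : Prop :=
  sym_mx M /\ forall x : 'cV[R]_p, 0 <= qform M x.

Definition pd (M : 'M[R]_p) : Prop :=
  sym_mx M /\ forall x : 'cV[R]_p, x != 0 -> 0 < qform M x.

Definition loewner_le (X Y : 'M[R]_p) : Prop := psd (Y - X).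
Definition loewner_lt (X Y : 'M[R]_p) : Prop := pd (Y - X).

(* A^{1/2}: the (unique) sym_mx positive definite square root of A
   (junk value 0 if A is not positive definite). *)
Definition msqrt (A : 'M[R]_p) : 'M[R]_p :=
  xget 0 [set S : 'M[R]_p | pd S /\ S *m S = A].

Definition minvsqrt (A : 'M[R]_p) : 'M[R]_p := invmx (msqrt A).

Definition frob2 (X Y : 'M[R]_p) : R :=
  \sum_(i < p) \sum_(j < p) (X i j - Y i j) ^+ 2.

Definition proj_psd (X : 'M[R]_p) : 'M[R]_p :=
  xget 0 [set P : 'M[R]_p | psd P /\ forall Q : 'M[R]_p, psd Q -> frob2 X P <= frob2 X Q].

Definition logdet (M : 'M[R]_p) : R := ln (\det M).

Definition objective (ki kj : R) (A B Y : 'M[R]_p) : R :=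
  ki * logdet (A - ki^-1 *: Y) + kj * logdet (B + kj^-1 *: Y).

Definition feasible (ki kj : R) (A B Y : 'M[R]_p) : Prop :=
  psd Y /\ loewner_lt (- (kj *: B)) Y /\ loewner_lt Y (ki *: A).

End Defs.

(* Conjugating by [A^(1/2)] (positive definite, as [0 <= Y < ki A] for a
   feasible [Y]) reduces the problem to [A = I] and shifts the objective by the
   constant [(ki + kj) ln (det A)].  For [A = I] let [P] be the projection of
   [I - B] onto the psd cone and [K = P - (I - B)]; the optimality conditions of
   the projection give [K >= 0] and [K P = 0].  With [a = kj / (ki + kj)] the
   candidate [ki a P] turns the two log-det arguments into [I - a P] and
   [I - a P + K], whose positivity follows from feasibility by testing on the
   eigenvectors of [P].  By concavity of log det the objective lies below its
   tangent at [ki a P], with slope [Y |-> - tr ((I - a P + K)^-1 K Y)]; this is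
   nonpositive on psd [Y] because [(I - a P + K)^-1 K] is psd (and kills [P]).
   The spectral theorem for real symmetric matrices, used throughout, comes from
   maximising the Rayleigh quotient on successive orthogonal complements. *)

From HB Require Import structures.
From mathcomp Require Import all_boot all_order all_algebra.
From mathcomp Require Import classical_sets boolp reals exp.
From mathcomp Require Import topology normedtype derive.
From mathcomp Require Import ring lra.
Import Order.TTheory GRing.Theory Num.Theory.
Import numFieldTopology.Exports numFieldNormedType.Exports.
Set Implicit Arguments. Unset Strict Implicit. Unset Printing Implicit Defensive.
Local Open Scope ring_scope.
Local Open Scope classical_set_scope.

Lemma quadratic_ge0_linear_coef_eq0 (R : realFieldType) (a b : R) :
  0 <= a -> (forall t, 0 <= 2 * t * b + t ^+ 2 * a) -> b = 0.
Proof.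
move=> a_ge0 hq; have a1_gt0 : 0 < a + 1 by lra.
have := hq (- b / (a + 1)).
have -> : 2 * (- b / (a + 1)) * b + (- b / (a + 1)) ^+ 2 * a
          = - (b ^+ 2 * (a + 2)) / (a + 1) ^+ 2 by field; lra.
rewrite pmulr_lge0 ?invr_gt0 ?exprn_gt0 // oppr_ge0 => hb.
have /eqP : b ^+ 2 = 0 by have := sqr_ge0 b; nra.
by rewrite sqrf_eq0 => /eqP.
Qed.

Section RowDot.
Variables (R : realType) (n : nat).
Implicit Types (x y z : 'rV[R]_n) (A : 'M[R]_n).

Definition dotr x y : R := \sum_j x 0 j * y 0 j.

Lemma dotrC x y : dotr x y = dotr y x.
Proof. by apply: eq_bigr => j _; rewrite mulrC. Qed.

Lemma dotrDl x y z : dotr (x + y) z = dotr x z + dotr y z.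
Proof. by rewrite /dotr -big_split; apply: eq_bigr => j _; rewrite mxE mulrDl. Qed.

Lemma dotrZl a x z : dotr (a *: x) z = a * dotr x z.
Proof. by rewrite /dotr mulr_sumr; apply: eq_bigr => j _; rewrite mxE mulrA. Qed.

Lemma dotrBl x y z : dotr (x - y) z = dotr x z - dotr y z.
Proof. by rewrite dotrDl -scaleN1r dotrZl mulN1r. Qed.

Lemma dotrDr x y z : dotr z (x + y) = dotr z x + dotr z y.
Proof. by rewrite !(dotrC z) dotrDl. Qed.

Lemma dotrZr a x z : dotr z (a *: x) = a * dotr z x.
Proof. by rewrite !(dotrC z) dotrZl. Qed.

Lemma dotr0l z : dotr 0 z = 0.
Proof. by rewrite /dotr big1 // => j _; rewrite mxE mul0r. Qed.

Lemma dotr_ge0 x : 0 <= dotr x x.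
Proof. by apply: sumr_ge0 => j _; rewrite -expr2 sqr_ge0. Qed.

Lemma dotr_eq0 x : dotr x x = 0 -> x = 0.
Proof.
move=> x0; apply/rowP => j; rewrite mxE.
have sq_ge0 (i : 'I_n) : true -> 0 <= x 0 i * x 0 i by rewrite -expr2 sqr_ge0.
by have /eqP := @psumr_eq0P _ _ xpredT _ sq_ge0 x0 j isT; rewrite mulf_eq0 orbb => /eqP.
Qed.

Lemma dotr_gt0 x : x != 0 -> 0 < dotr x x.
Proof.
move=> x0; rewrite lt_neqAle dotr_ge0 andbT eq_sym.
by apply: contra x0 => /eqP/dotr_eq0 ->.
Qed.

Lemma dotrE x y : (x *m y^T) 0 0 = dotr x y.
Proof. by rewrite mxE; apply: eq_bigr => j _; rewrite mxE. Qed.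

Lemma dotr_mulmx_sym A x y : A^T = A -> dotr (x *m A) y = dotr x (y *m A).
Proof. by move=> sA; rewrite -!dotrE trmx_mul sA mulmxA. Qed.

Lemma continuous_dotr (T : topologicalType) (f g : T -> 'rV[R]_n) :
  (forall j, continuous (fun t => f t 0 j)) ->
  (forall j, continuous (fun t => g t 0 j)) ->
  continuous (fun t => dotr (f t) (g t)).
Proof.
move=> fc gc; rewrite /dotr; apply: continuous_big => [|j _ t].
  exact: add_continuous.
by apply: continuousM; [exact: fc | exact: gc].
Qed.

Lemma continuous_mulmx_coord A j : continuous (fun x : 'rV[R]_n => (x *m A) 0 j).
Proof.
have -> : (fun x : 'rV[R]_n => (x *m A) 0 j) = (fun x => \sum_k x 0 k * A k j).
  by apply/funext => x; rewrite mxE.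
apply: continuous_big => [|k _]; first exact: add_continuous.
have xk := @coord_continuous R 1 n 0 k.
by move=> x; apply: continuousM; [exact: xk | exact: cst_continuous].
Qed.

End RowDot.

Section SymSpectral.
Variables (R : realType) (n : nat) (A : 'M[R]_n).
Hypothesis symA : A^T = A.
Implicit Types (x y z c : 'rV[R]_n) (v : 'I_n -> 'rV[R]_n).

Definition orthogonal_prefix k v x := forall i : 'I_n, (i < k)%N -> dotr x (v i) = 0.

Lemma orthogonal_prefixD k v x y :
  orthogonal_prefix k v x -> orthogonal_prefix k v y ->
  orthogonal_prefix k v (x + y).
Proof. by move=> hx hy i ik; rewrite dotrDl hx ?hy ?addr0. Qed.

Lemma orthogonal_prefixZ k v a x :
  orthogonal_prefix k v x -> orthogonal_prefix k v (a *: x).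
Proof. by move=> hx i ik; rewrite dotrZl hx ?mulr0. Qed.

Lemma exists_orthogonal_prefix_neq0 k v : (k < n)%N ->
  exists2 x, x != 0 & orthogonal_prefix k v x.
Proof.
move=> kn.
pose V := \matrix_(i < n, j < n) (if (i < k)%N then v i 0 j else 0) : 'M[R]_n.
have rankV : (\rank V <= k)%N.
  have -> : V = pid_mx k *m V.
    apply/matrixP => i j; rewrite [RHS]mxE (bigD1 i) //= big1 => [|l li].
      by rewrite !mxE eqxx /= addr0; case: ifP; rewrite ?mul1r ?mul0r.
    rewrite mxE; case: eqP => [/ord_inj il|]; last by rewrite mul0r.
    by rewrite il eqxx in li.
  by apply: leq_trans (mxrankM_maxl _ _) _; rewrite rank_pid_mx // ltnW.
have : (0 < \rank (kermx V^T))%N.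
  by rewrite mxrank_ker mxrank_tr subn_gt0; apply: leq_ltn_trans rankV kn.
rewrite lt0n mxrank_eq0 => /eqP K0.
have [i Ki] : exists i, row i (kermx V^T) != 0.
  apply/existsP; apply: contraT; rewrite negb_exists => /forallP K0'.
  by case: K0; apply/row_matrixP => l; rewrite row0; apply/eqP/negPn.
exists (row i (kermx V^T)) => // j jk.
have /matrixP/(_ i j) := mulmx_ker V^T.
by rewrite !mxE => <-; apply: eq_bigr => l _; rewrite !mxE jk.
Qed.

Lemma dotr_normalize x : x != 0 ->
  dotr ((Num.sqrt (dotr x x))^-1 *: x) ((Num.sqrt (dotr x x))^-1 *: x) = 1.
Proof.
move=> x0; have xx_gt0 := dotr_gt0 x0.
rewrite dotrZl dotrZr mulrA -expr2 exprVn sqr_sqrtr ?mulVf ?gt_eqF //.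
exact: ltW.
Qed.

Lemma exists_rayleigh_max k v : (k < n)%N ->
  exists2 c, dotr c c = 1 /\ orthogonal_prefix k v c &
    forall z, orthogonal_prefix k v z ->
      dotr (z *m A) z <= dotr (c *m A) c * dotr z z.
Proof.
move=> kn.
pose g x := \sum_(i < n | (i < k)%N) dotr x (v i) ^+ 2.
have g0P x : g x = 0 <-> orthogonal_prefix k v x.
  split=> [gx i ik|hx]; last by rewrite /g big1 // => i ik; rewrite hx // expr0n.
  have /eqP := @psumr_eq0P _ _ (fun i : 'I_n => (i < k)%N)
    (fun i => dotr x (v i) ^+ 2) (fun i _ => sqr_ge0 _) gx i ik.
  by rewrite sqrf_eq0 => /eqP.
pose S := [set x | dotr x x = 1 /\ g x = 0].
pose nrm x := (Num.sqrt (dotr x x))^-1 *: x.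
have nrmS x : x != 0 -> orthogonal_prefix k v x -> S (nrm x).
  move=> x0 hx; split; first exact: dotr_normalize.
  by apply/g0P/orthogonal_prefixZ.
have S0 : S !=set0.
  by have [x x0 hx] := exists_orthogonal_prefix_neq0 v kn; exists (nrm x); exact: nrmS.
have Scompact : compact S.
  apply: (subclosed_compact _ (rV_compact (fun _ => @segment_compact R (-1) 1))).
    change (closed ((fun x => dotr x x) @^-1` [set 1] `&` g @^-1` [set 0])).
    apply: closedI; apply: preimage_closed; try exact: closed_eq.
      by move=> x _; apply: continuous_dotr => j; exact: coord_continuous.
    move=> x _; apply: continuous_big => [|i _]; first exact: add_continuous.
    have vi : continuous (fun x => dotr x (v i)).
      by apply: continuous_dotr => j; [exact: coord_continuous | exact: cst_continuous].
    by move=> y; exact: (continuousM (vi y) (vi y)).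
  move=> x [x1 _] i /=; rewrite in_itv /=.
  have : x 0 i ^+ 2 <= 1.
    rewrite -x1 /dotr (bigD1 i) //= -expr2 lerDl.
    by apply: sumr_ge0 => j _; rewrite -expr2 sqr_ge0.
  by move=> h; apply/andP; split; nra.
have qc : continuous (fun x => dotr (x *m A) x).
  by apply: continuous_dotr => j; [exact: continuous_mulmx_coord | exact: coord_continuous].
have [c cS cmax] := EVT_max_rV S0 Scompact (continuous_subspaceT qc).
have [c1 /g0P cW] := set_mem cS.
exists c => // z hz; have [->|z0] := eqVneq z 0.
  by rewrite mul0mx !dotr0l mulr0.
have := cmax _ (mem_set (nrmS z z0 hz)); rewrite /nrm -scalemxAl dotrZl dotrZr.
set s := Num.sqrt (dotr z z).
have s2 : s ^+ 2 = dotr z z by rewrite sqr_sqrtr // dotr_ge0.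
have s_gt0 : 0 < s by rewrite sqrtr_gt0 dotr_gt0.
move=> h; rewrite -s2.
have -> : dotr (z *m A) z = s ^+ 2 * (s^-1 * (s^-1 * dotr (z *m A) z)).
  by field; rewrite gt_eqF.
by rewrite [_ * s ^+ 2]mulrC ler_wpM2l // exprn_ge0 // ltW.
Qed.

(* The form [z |-> l |z|^2 - zA.z] is nonnegative on the complement and vanishes
   at [c], so its linear part [<l c - cA, z>] vanishes there; as the complement
   is [A]-invariant, it contains [l c - cA] itself, which is therefore [0]. *)
Lemma rayleigh_max_eigenvector k v (mu : 'I_n -> R) c :
  (forall i : 'I_n, (i < k)%N -> v i *m A = mu i *: v i) ->
  dotr c c = 1 -> orthogonal_prefix k v c ->
  (forall z, orthogonal_prefix k v z ->
     dotr (z *m A) z <= dotr (c *m A) c * dotr z z) ->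
  c *m A = dotr (c *m A) c *: c.
Proof.
move=> ev c1 cW cmax; set l := dotr (c *m A) c.
have gradW z : orthogonal_prefix k v z -> l * dotr c z - dotr (c *m A) z = 0.
  move=> hz; apply: (@quadratic_ge0_linear_coef_eq0 _ (l * dotr z z - dotr (z *m A) z)).
    by rewrite subr_ge0 cmax.
  move=> t; have /cmax : orthogonal_prefix k v (c + t *: z).
    exact/orthogonal_prefixD/orthogonal_prefixZ.
  rewrite mulmxDl -scalemxAl !dotrDl !dotrDr !dotrZl !dotrZr.
  rewrite (dotrC z c) (dotr_mulmx_sym z c symA) (dotrC z (c *m A)) c1 -/l.
  nra.
pose w := l *: c - c *m A.
have wW : orthogonal_prefix k v w.
  move=> i ik; rewrite /w dotrBl dotrZl cW // mulr0 sub0r dotr_mulmx_sym //.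
  by rewrite ev // dotrZr cW // mulr0 oppr0.
have /dotr_eq0/eqP : dotr w w = 0 by rewrite -(gradW _ wW) /w dotrBl dotrZl.
by rewrite subr_eq0 eq_sym => /eqP.
Qed.

Lemma orthonormal_eigenvectors k : (k <= n)%N ->
  exists (v : 'I_n -> 'rV[R]_n) (mu : 'I_n -> R),
  (forall i j : 'I_n, (i < k)%N -> (j < k)%N -> dotr (v i) (v j) = (i == j)%:R) /\
  (forall i : 'I_n, (i < k)%N -> v i *m A = mu i *: v i).
Proof.
elim: k => [_|k IH kn]; first by exists (fun _ => 0), (fun _ => 0).
have [v [mu [vo ve]]] := IH (ltnW kn).
have [c [c1 cW] cmax] := exists_rayleigh_max v kn.
have cA := rayleigh_max_eigenvector ve c1 cW cmax.
exists (fun i : 'I_n => if i == k :> nat then c else v i).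
exists (fun i : 'I_n => if i == k :> nat then dotr (c *m A) c else mu i).
have lt_k (i : 'I_n) : (i < k.+1)%N -> (i == k :> nat) = false -> (i < k)%N.
  by rewrite ltnS leq_eqVlt => /orP[/eqP->|//]; rewrite eqxx.
split=> [i j ik jk|i ik]; last by case: eqP => // /eqP/negPf ine; exact: ve (lt_k _ ik ine).
case: eqP => [ieq|/eqP/negPf ine]; case: eqP => [jeq|/eqP/negPf jne].
- have -> : i = j by apply: ord_inj; rewrite ieq jeq.
  by rewrite c1 eqxx.
- by rewrite cW ?lt_k //; case: eqP => // ij; rewrite -ij ieq eqxx in jne.
- by rewrite dotrC cW ?lt_k //; case: eqP => // ij; rewrite ij jeq eqxx in ine.
- by rewrite vo ?lt_k.
Qed.

Theorem sym_spectral : exists (U : 'M[R]_n) (d : 'rV[R]_n),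
  U *m U^T = 1%:M /\ A = U^T *m diag_mx d *m U.
Proof.
have [v [mu [vo ve]]] := orthonormal_eigenvectors (leqnn n).
pose U := \matrix_(i < n, j < n) v i 0 j.
have UUt : U *m U^T = 1%:M.
  by apply/matrixP => i j; rewrite !mxE -vo //; apply: eq_bigr => l _; rewrite !mxE.
exists U, (\row_i mu i); split => //.
have UA : U *m A = diag_mx (\row_i mu i) *m U.
  apply/matrixP => i j; rewrite mul_diag_mx !mxE.
  have := congr1 (fun M : 'rV[R]_n => M 0 j) (ve i (ltn_ord i)).
  by rewrite !mxE => <-; apply: eq_bigr => l _; rewrite mxE.
by rewrite -mulmxA -UA mulmxA (mulmx1C UUt) mul1mx.
Qed.

End SymSpectral.

Section QuadraticForms.
Variables (R : realType) (p : nat).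
Implicit Types (M N S : 'M[R]_p) (x : 'cV[R]_p).

Lemma qformD M N x : qform (M + N) x = qform M x + qform N x.
Proof. by rewrite /qform mulmxDr mulmxDl mxE. Qed.

Lemma qformZ a M x : qform (a *: M) x = a * qform M x.
Proof. by rewrite /qform -scalemxAr -scalemxAl mxE. Qed.

Lemma qformB M N x : qform (M - N) x = qform M x - qform N x.
Proof. by rewrite qformD -scaleN1r qformZ mulN1r. Qed.

Lemma qform1 x : qform 1%:M x = (x^T *m x) 0 0.
Proof. by rewrite /qform mulmx1. Qed.

Lemma qform_eigenvector M x a : M *m x = a *: x -> qform M x = a * qform 1%:M x.
Proof. by move=> Mx; rewrite /qform mulmx1 -mulmxA Mx -scalemxAr mxE. Qed.

Lemma qform_congr S M x : S^T = S -> qform (S *m M *m S) x = qform M (S *m x).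
Proof. by move=> sS; rewrite /qform trmx_mul sS !mulmxA. Qed.

Lemma sym_congr S M : S^T = S -> sym_mx M -> sym_mx (S *m M *m S).
Proof. by move=> sS sM; rewrite /sym_mx !trmx_mul sS sM mulmxA. Qed.

Lemma psd_congr S M : S^T = S -> psd M -> psd (S *m M *m S).
Proof. by move=> sS [sM M_ge0]; split=> [|x]; [exact: sym_congr | rewrite qform_congr]. Qed.

Lemma pd_congr S M : S^T = S -> S \in unitmx -> pd M -> pd (S *m M *m S).
Proof.
move=> sS uS [sM M_gt0]; split=> [|x x0]; first exact: sym_congr.
rewrite qform_congr //; apply: M_gt0; apply: contra x0 => /eqP Sx.
by rewrite -[x]mul1mx -(mulVmx uS) -mulmxA Sx mulmx0.
Qed.

Lemma pd_psd M : pd M -> psd M.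
Proof.
move=> [sM M_gt0]; split=> // x; have [->|x0] := eqVneq x 0; last exact/ltW/M_gt0.
by rewrite /qform mulmx0 mxE.
Qed.

Lemma psdD M N : psd M -> psd N -> psd (M + N).
Proof.
move=> [sM M_ge0] [sN N_ge0]; split=> [|x]; first by rewrite /sym_mx linearD /= sM sN.
by rewrite qformD addr_ge0.
Qed.

Lemma psdZ a M : 0 <= a -> psd M -> psd (a *: M).
Proof.
move=> a_ge0 [sM M_ge0]; split=> [|x]; first by rewrite /sym_mx linearZ /= sM.
by rewrite qformZ mulr_ge0.
Qed.

Lemma pdD_psd M N : pd M -> psd N -> pd (M + N).
Proof.
move=> [sM M_gt0] [sN N_ge0]; split=> [|x x0]; first by rewrite /sym_mx linearD /= sM sN.
by rewrite qformD; have := M_gt0 x x0; have := N_ge0 x; lra.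
Qed.

Lemma pdZ a M : 0 < a -> pd M -> pd (a *: M).
Proof.
move=> a_gt0 [sM M_gt0]; split=> [|x x0]; first by rewrite /sym_mx linearZ /= sM.
by rewrite qformZ mulr_gt0 // M_gt0.
Qed.

Lemma psd_gram M : psd (M^T *m M).
Proof.
split=> [|x]; first by rewrite /sym_mx trmx_mul trmxK.
rewrite /qform; have -> : x^T *m (M^T *m M) *m x = (M *m x)^T *m (M *m x) by rewrite trmx_mul !mulmxA.
rewrite mxE.
by apply: sumr_ge0 => j _; rewrite mxE -expr2 sqr_ge0.
Qed.

Lemma psd_qform_eq0 M x : psd M -> qform M x = 0 -> M *m x = 0.
Proof.
move=> [sM M_ge0] Mx0; pose c := x^T.
have qformE z : qform M z^T = dotr (z *m M) z by rewrite /qform trmxK -dotrE.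
have cMz z : dotr (c *m M) z = 0.
  apply: (@quadratic_ge0_linear_coef_eq0 _ (dotr (z *m M) z)); first by rewrite -qformE.
  move=> t; have := M_ge0 (c + t *: z)^T; rewrite qformE.
  rewrite mulmxDl -scalemxAl !dotrDl !dotrDr !dotrZl !dotrZr.
  rewrite -[dotr (c *m M) c]qformE trmxK Mx0 (dotr_mulmx_sym z c sM) (dotrC z (c *m M)).
  lra.
by rewrite -[M]sM -[x]trmxK -trmx_mul (dotr_eq0 (cMz _)) trmx0.
Qed.

End QuadraticForms.

Section SpectralMx.
Variables (R : realType) (p : nat).
Implicit Types (U M Z : 'M[R]_p) (d : 'rV[R]_p) (x : 'cV[R]_p).

Definition orthmx U := U *m U^T = 1%:M.

Definition spectral_mx U d := U^T *m diag_mx d *m U.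

Lemma orthmxT U : orthmx U -> U^T *m U = 1%:M.
Proof. exact: mulmx1C. Qed.

Lemma sym_spectral_decomp M : sym_mx M ->
  exists U d, orthmx U /\ M = spectral_mx U d.
Proof. by move=> sM; have [U [d [oU ->]]] := sym_spectral sM; exists U, d. Qed.

Lemma sym_spectral_mx U d : sym_mx (spectral_mx U d).
Proof. by rewrite /sym_mx /spectral_mx !trmx_mul tr_diag_mx trmxK mulmxA. Qed.

Lemma qform_spectral_mx U d x :
  qform (spectral_mx U d) x = \sum_i d 0 i * (U *m x) i 0 ^+ 2.
Proof.
rewrite /qform /spectral_mx.
have -> : x^T *m (U^T *m diag_mx d *m U) *m x = (U *m x)^T *m diag_mx d *m (U *m x).
  by rewrite trmx_mul !mulmxA.
by rewrite mxE; apply: eq_bigr => i _; rewrite mul_mx_diag !mxE; ring.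
Qed.

Lemma psd_spectral_mx U d : (forall i, 0 <= d 0 i) -> psd (spectral_mx U d).
Proof.
move=> d_ge0; split=> [|x]; first exact: sym_spectral_mx.
by rewrite qform_spectral_mx; apply: sumr_ge0 => i _; rewrite mulr_ge0 ?sqr_ge0.
Qed.

Lemma pd_spectral_mx U d : orthmx U -> (forall i, 0 < d 0 i) -> pd (spectral_mx U d).
Proof.
move=> oU d_gt0; split=> [|x x0]; first exact: sym_spectral_mx.
have Ux0 : U *m x != 0.
  apply: contra x0 => /eqP Ux0; apply/eqP.
  by rewrite -[x]mul1mx -(orthmxT oU) -mulmxA Ux0 mulmx0.
have ge0 (i : 'I_p) : true -> 0 <= d 0 i * (U *m x) i 0 ^+ 2.
  by rewrite mulr_ge0 ?sqr_ge0 ?ltW.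
rewrite qform_spectral_mx lt_neqAle sumr_ge0 // andbT eq_sym.
apply: contra Ux0 => /eqP sum0; apply/eqP/matrixP => i j.
rewrite [j]ord1 [RHS]mxE; have /eqP := @psumr_eq0P _ _ _ _ ge0 sum0 i isT.
by rewrite mulf_eq0 (gt_eqF (d_gt0 i)) sqrf_eq0 => /eqP.
Qed.

Lemma orthmx_mul_row U i : orthmx U -> U *m (row i U)^T = (row i 1%:M)^T.
Proof. by move=> oU; rewrite -[U in U *m _]trmxK -trmx_mul -row_mul oU. Qed.

Lemma orthmx_row_neq0 U i : orthmx U -> (row i U)^T != 0.
Proof.
move=> oU; apply/eqP => Ui0.
have := orthmx_mul_row i oU; rewrite Ui0 mulmx0 => /matrixP/(_ i 0).
by rewrite !mxE eqxx => /eqP; rewrite eq_sym oner_eq0.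
Qed.

Lemma qform1_row U i : orthmx U -> qform 1%:M (row i U)^T = 1.
Proof.
move=> oU; rewrite qform1 trmxK dotrE.
have /matrixP/(_ i i) := oU; rewrite !mxE eqxx /= mulr1n => <-.
by apply: eq_bigr => j _; rewrite !mxE.
Qed.

Lemma spectral_mx_row U d i : orthmx U ->
  spectral_mx U d *m (row i U)^T = d 0 i *: (row i U)^T.
Proof.
move=> oU; rewrite /spectral_mx -mulmxA orthmx_mul_row // -mulmxA.
have -> : diag_mx d *m (row i 1%:M)^T = d 0 i *: (row i 1%:M)^T.
  apply/matrixP => j k; rewrite mul_diag_mx !mxE.
  by have [->|ij] := eqVneq i j; rewrite ?mulr0n ?mulr0.
by rewrite -scalemxAr -trmx_mul -row_mul mul1mx.
Qed.

Lemma qform_spectral_mx_row U d i : orthmx U ->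
  qform (spectral_mx U d) (row i U)^T = d 0 i.
Proof. by move=> oU; rewrite (qform_eigenvector (spectral_mx_row d i oU)) qform1_row ?mulr1. Qed.

Lemma psd_spectral_ge0 U d : orthmx U -> psd (spectral_mx U d) -> forall i, 0 <= d 0 i.
Proof. by move=> oU [_ h] i; rewrite -(qform_spectral_mx_row d i oU). Qed.

Lemma pd_spectral_gt0 U d : orthmx U -> pd (spectral_mx U d) -> forall i, 0 < d 0 i.
Proof.
by move=> oU [_ h] i; rewrite -(qform_spectral_mx_row d i oU) h // orthmx_row_neq0.
Qed.

Lemma det_spectral_mx U d : orthmx U -> \det (spectral_mx U d) = \prod_i d 0 i.
Proof.
move=> oU; rewrite /spectral_mx !det_mulmx det_diag det_tr mulrC mulrA.
by rewrite -{1}det_tr -det_mulmx orthmxT // det1 mul1r.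
Qed.

Lemma tr_spectral_mx U d : orthmx U -> \tr (spectral_mx U d) = \sum_i d 0 i.
Proof.
move=> oU; rewrite /spectral_mx mxtrace_mulC mulmxA oU mul1mx mxtrace_diag.
by apply: eq_bigr => i _.
Qed.

Lemma spectral_mx_affine U d a b : orthmx U ->
  spectral_mx U (\row_i (a + b * d 0 i)) = a *: 1%:M + b *: spectral_mx U d.
Proof.
move=> oU; rewrite /spectral_mx.
have -> : diag_mx (\row_i (a + b * d 0 i)) = a *: 1%:M + b *: diag_mx d.
  by apply/matrixP => i j; rewrite !mxE; case: eqP => _; rewrite ?mulr1n ?mulr1 ?mulr0n ?mulr0 ?addr0.
by rewrite (mulmxDr U^T) mulmxDl -!scalemxAr -!scalemxAl mulmx1 orthmxT.
Qed.

Lemma tr_spectral_mx_mul U d Z : orthmx U ->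
  \tr (spectral_mx U d *m Z) = \sum_i d 0 i * qform Z (row i U)^T.
Proof.
move=> oU; rewrite /spectral_mx -!mulmxA mxtrace_mulC /mxtrace.
apply: eq_bigr => i _; rewrite !mulmxA mul_diag_mx mxE.
rewrite /qform trmxK mxE mulr_sumr; apply: eq_bigr => j _.
by rewrite !mxE !mulr_suml mulr_sumr; apply: eq_bigr => k _; rewrite !mxE; ring.
Qed.

End SpectralMx.

Section PdTheory.
Variables (R : realType) (p : nat).
Implicit Types (M N K Z S : 'M[R]_p).

Lemma pd_det_gt0 M : pd M -> 0 < \det M.
Proof.
move=> pM; have [U [d [oU eM]]] := sym_spectral_decomp pM.1; subst M.
by rewrite det_spectral_mx //; apply: prodr_gt0 => i _; exact: pd_spectral_gt0 oU pM i.
Qed.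

Lemma pd_unitmx M : pd M -> M \in unitmx.
Proof. by move=> pM; rewrite unitmxE unitfE gt_eqF // pd_det_gt0. Qed.

Lemma sym_invmx S : S^T = S -> (invmx S)^T = invmx S.
Proof. by move=> sS; rewrite trmx_inv sS. Qed.

Lemma invmxM M N : M \in unitmx -> N \in unitmx ->
  invmx (M *m N) = invmx N *m invmx M.
Proof.
move=> uM uN; have uMN : M *m N \in unitmx by rewrite unitmx_mul uM.
have h : M *m N *m (invmx N *m invmx M) = 1%:M by rewrite mulmxA (mulmxK uN) (mulmxV uM).
by rewrite -[LHS]mulmx1 -h (mulKmx uMN).
Qed.

Lemma pd_sqrt M : pd M -> exists S, pd S /\ S *m S = M.
Proof.
move=> pM; have [U [d [oU eM]]] := sym_spectral_decomp pM.1; subst M.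
have d_gt0 := pd_spectral_gt0 oU pM.
exists (spectral_mx U (\row_i Num.sqrt (d 0 i))); split.
  by apply: pd_spectral_mx => // i; rewrite mxE sqrtr_gt0.
rewrite /spectral_mx !mulmxA -[_ *m U *m U^T]mulmxA oU mulmx1.
rewrite -[U^T *m _ *m _]mulmxA mulmx_diag; congr (_ *m diag_mx _ *m _).
by apply/rowP => i; rewrite !mxE -expr2 sqr_sqrtr // ltW.
Qed.

Lemma msqrtP M : pd M -> pd (msqrt M) /\ msqrt M *m msqrt M = M.
Proof. by move=> pM; apply: (xgetPex 0 (pd_sqrt pM)). Qed.

Lemma tr_psd_mul_ge0 K Z : psd K -> psd Z -> 0 <= \tr (K *m Z).
Proof.
move=> pK pZ; have [U [e [oU eK]]] := sym_spectral_decomp pK.1; subst K.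
have e_ge0 := psd_spectral_ge0 oU pK.
by rewrite tr_spectral_mx_mul //; apply: sumr_ge0 => i _; rewrite mulr_ge0 ?pZ.2.
Qed.

Lemma tr_psd_mul_eq0 K Z : psd K -> psd Z -> \tr (K *m Z) = 0 -> K *m Z = 0.
Proof.
move=> pK pZ; have [U [e [oU eK]]] := sym_spectral_decomp pK.1; subst K.
have e_ge0 := psd_spectral_ge0 oU pK.
have ge0 (i : 'I_p) : true -> 0 <= e 0 i * qform Z (row i U)^T.
  by rewrite mulr_ge0 ?pZ.2.
rewrite tr_spectral_mx_mul // => tr0.
suff : diag_mx e *m (U *m Z) = 0 by rewrite /spectral_mx -!mulmxA => ->; rewrite mulmx0.
apply/matrixP => i j; rewrite mul_diag_mx !mxE.
have /eqP := @psumr_eq0P _ _ _ _ ge0 tr0 i isT; rewrite mulf_eq0.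
case/orP => [/eqP->|/eqP /(psd_qform_eq0 pZ) Zu]; first by rewrite mul0r.
have : (row i U *m Z) 0 j = 0 by rewrite -[Z]pZ.1 -[row i U]trmxK -trmx_mul Zu !mxE.
rewrite -row_mul mxE => UZ0.
have -> : \sum_k U i k * Z k j = (U *m Z) i j by rewrite mxE.
by rewrite UZ0 mulr0.
Qed.

Lemma ln_prod (f : 'I_p -> R) : (forall i, 0 < f i) ->
  ln (\prod_i f i) = \sum_i ln (f i).
Proof.
move=> f_gt0.
suff [] : 0 < \prod_i f i /\ ln (\prod_i f i) = \sum_i ln (f i) by [].
apply: (big_rec2 (fun a b => 0 < a /\ ln a = b)); first by rewrite ln1.
move=> i a b _ [a_gt0 <-]; have fa_gt0 := mulr_gt0 (f_gt0 i) a_gt0.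
by split=> //; rewrite lnM ?posrE.
Qed.

Lemma logdet_le_tr M : pd M -> logdet M <= \tr M - p%:R.
Proof.
move=> pM; have [U [d [oU eM]]] := sym_spectral_decomp pM.1; subst M.
have d_gt0 := pd_spectral_gt0 oU pM.
rewrite /logdet det_spectral_mx // tr_spectral_mx // ln_prod //.
rewrite -[p in p%:R]card_ord -sumr_const -sumrB; apply: ler_sum => i _.
have := @le_ln1Dx R (d 0 i - 1); rewrite [1 + _]addrC subrK; apply.
by have := d_gt0 i; lra.
Qed.

(* Writing [M0 = S S], the claim is [logdet W <= tr W - p] for [W = S^-1 M S^-1]. *)
Lemma logdet_concave M M0 : pd M -> pd M0 ->
  logdet M <= logdet M0 + \tr (invmx M0 *m (M - M0)).
Proof.
move=> pM pM0; have [pS SS] := msqrtP pM0; set S := msqrt M0 in pS SS.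
have uS := pd_unitmx pS; set T := invmx S.
have sT : T^T = T by apply/sym_invmx/pS.1.
have uT : T \in unitmx by rewrite unitmx_inv.
have pW : pd (T *m M *m T) by apply: pd_congr.
have eM : M = S *m (T *m M *m T) *m S.
  by rewrite !mulmxA (mulmxV uS) mul1mx -mulmxA (mulVmx uS) mulmx1.
have trW : \tr (T *m M *m T) = \tr (invmx M0 *m M).
  by rewrite -SS invmxM // mxtrace_mulC mulmxA.
move: (T *m M *m T) pW eM trW => W pW eM trW.
have -> : logdet M = logdet M0 + logdet W.
  rewrite /logdet {1}eM -SS !det_mulmx -lnM ?posrE ?mulr_gt0 ?pd_det_gt0 //.
  by congr ln; ring.
rewrite lerD2l; apply: le_trans (logdet_le_tr pW) _.
by rewrite mulmxBr linearB /= (mulVmx (pd_unitmx pM0)) mxtrace1 trW.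
Qed.

End PdTheory.

Lemma linear_coef_le0 (R : realFieldType) (a b : R) : 0 <= b ->
  (forall t, 0 < t -> t < 1 -> 2 * t * a <= t ^+ 2 * b) -> a <= 0.
Proof.
move=> b_ge0 hq; rewrite leNgt; apply/negP => a_gt0.
have c_gt0 : 0 < a + b + 1 by lra.
set t := a / (a + b + 1).
have ht : t * (a + b + 1) = a by rewrite /t mulrVK // unitfE gt_eqF.
have t_gt0 : 0 < t by rewrite divr_gt0.
have t_lt1 : t < 1 by rewrite ltr_pdivrMr // mul1r; lra.
have tb : 2 * a <= t * b.
  rewrite -(ler_pM2l t_gt0); have := hq t t_gt0 t_lt1.
  nra.
have := ler_pM2r c_gt0 (2 * a) (t * b); rewrite tb [t * b * _]mulrAC ht => /idP.
nra.
Qed.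

Section PsdProjection.
Variables (R : realType) (p : nat).
Implicit Types (U M N X P Q E H : 'M[R]_p) (d : 'rV[R]_p) (x : 'cV[R]_p).

Definition frob_dot M N := \sum_i \sum_j M i j * N i j.

Lemma frob_dotE M N : frob_dot M N = \tr (M^T *m N).
Proof.
rewrite /frob_dot /mxtrace exchange_big /=; apply: eq_bigr => i _.
by rewrite mxE; apply: eq_bigr => j _; rewrite mxE.
Qed.

Lemma frob_dotC M N : frob_dot M N = frob_dot N M.
Proof. by apply: eq_bigr => i _; apply: eq_bigr => j _; rewrite mulrC. Qed.

Lemma frob_dotDl M N H : frob_dot (M + N) H = frob_dot M H + frob_dot N H.
Proof.
rewrite /frob_dot -big_split; apply: eq_bigr => i _.
by rewrite -big_split; apply: eq_bigr => j _; rewrite mxE mulrDl.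
Qed.

Lemma frob_dotZl a M H : frob_dot (a *: M) H = a * frob_dot M H.
Proof.
rewrite /frob_dot mulr_sumr; apply: eq_bigr => i _.
by rewrite mulr_sumr; apply: eq_bigr => j _; rewrite mxE mulrA.
Qed.

Lemma frob_dotNl M H : frob_dot (- M) H = - frob_dot M H.
Proof. by rewrite -scaleN1r frob_dotZl mulN1r. Qed.

Lemma frob_dot_ge0 M : 0 <= frob_dot M M.
Proof. by apply: sumr_ge0 => i _; apply: sumr_ge0 => j _; rewrite -expr2 sqr_ge0. Qed.

Lemma frob2E X Y : frob2 X Y = frob_dot (X - Y) (X - Y).
Proof.
by apply: eq_bigr => i _; apply: eq_bigr => j _; rewrite !mxE expr2.
Qed.

Lemma frob_dot_expand E H t :
  frob_dot (E + t *: H) (E + t *: H) =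
  frob_dot E E + 2 * t * frob_dot E H + t ^+ 2 * frob_dot H H.
Proof.
rewrite frob_dotDl frob_dotZl !(frob_dotC _ (E + t *: H)) !frob_dotDl !frob_dotZl.
by rewrite (frob_dotC H E); ring.
Qed.

Lemma frob_dot_rank1 M x : frob_dot M (x *m x^T) = qform M x.
Proof.
rewrite /frob_dot /qform mxE exchange_big /=; apply: eq_bigr => j _.
rewrite mxE mulr_suml; apply: eq_bigr => i _.
by rewrite !mxE big_ord1 !mxE; ring.
Qed.

Lemma frob_dot_orthmx U M : orthmx U ->
  frob_dot (U *m M *m U^T) (U *m M *m U^T) = frob_dot M M.
Proof.
move=> oU; rewrite !frob_dotE !trmx_mul trmxK.
rewrite -!mulmxA [U^T *m (U *m _)]mulmxA (orthmxT oU) mul1mx.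
by rewrite mxtrace_mulC -!mulmxA (orthmxT oU) mulmx1.
Qed.

Lemma frob_dot_ge_diag M : \sum_i M i i ^+ 2 <= frob_dot M M.
Proof.
apply: ler_sum => i _; rewrite (bigD1 i) //= -expr2 lerDl.
by apply: sumr_ge0 => j _; rewrite -expr2 sqr_ge0.
Qed.

Lemma frob_dot_diag d : frob_dot (diag_mx d) (diag_mx d) = \sum_i d 0 i ^+ 2.
Proof.
apply: eq_bigr => i _; rewrite (bigD1 i) //= big1 ?addr0 => [|j ji].
  by rewrite !mxE eqxx /= mulr1n expr2.
by rewrite !mxE eq_sym (negPf ji) mulr0n mulr0.
Qed.

(* Clip the negative eigenvalues of [X]: in the eigenbasis of [X] the squared
   distance to a psd [Q] is at least the sum of the squared diagonal gaps. *)
Lemma exists_proj_psd X : sym_mx X ->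
  exists P, psd P /\ forall Q, psd Q -> frob2 X P <= frob2 X Q.
Proof.
move=> sX; have [U [d [oU eX]]] := sym_spectral_decomp sX; subst X.
pose dp := \row_i Num.max (d 0 i) 0.
exists (spectral_mx U dp); split=> [|Q pQ].
  by apply: psd_spectral_mx => i; rewrite mxE le_max lexx orbT.
have rotate M : U *m (spectral_mx U d - M) *m U^T = diag_mx d - U *m M *m U^T.
  rewrite mulmxBr mulmxBl /spectral_mx !mulmxA oU mul1mx -!mulmxA oU mulmx1.
  by rewrite !mulmxA.
rewrite !frob2E -(frob_dot_orthmx _ oU) (rotate (spectral_mx U dp)).
rewrite -(frob_dot_orthmx (spectral_mx U d - Q) oU) (rotate Q).
have -> : diag_mx d - U *m spectral_mx U dp *m U^T = diag_mx (d - dp).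
  by rewrite /spectral_mx !mulmxA oU mul1mx -!mulmxA oU mulmx1 linearB.
rewrite frob_dot_diag; apply: le_trans (frob_dot_ge_diag _); apply: ler_sum => i _.
have q_ge0 := pQ.2 (row i U)^T.
have -> : (diag_mx d - U *m Q *m U^T) i i = d 0 i - qform Q (row i U)^T.
  rewrite !mxE eqxx mulr1n /qform trmxK -row_mul !mxE.
  by congr (_ - _); apply: eq_bigr => l _; rewrite !mxE.
rewrite !mxE; case: (leP 0 (d 0 i)) => [d_ge0|d_lt0].
  by rewrite subrr expr0n sqr_ge0.
by rewrite subr0; nra.
Qed.

Lemma proj_psdP X : sym_mx X ->
  psd (proj_psd X) /\ forall Q, psd Q -> frob2 X (proj_psd X) <= frob2 X Q.
Proof. by move=> sX; apply: (xgetPex 0 (exists_proj_psd sX)). Qed.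

Lemma psd_rank1 x : psd (x *m x^T).
Proof.
split=> [|y]; first by rewrite /sym_mx trmx_mul trmxK.
rewrite /qform.
have -> : y^T *m (x *m x^T) *m y = (y^T *m x) *m (y^T *m x)^T.
  by rewrite trmx_mul trmxK !mulmxA.
by rewrite mxE big_ord1 [X in _ * X]mxE -expr2 sqr_ge0.
Qed.

(* First-order optimality of the projection [P] of [X]: [<X - P, H> <= 0] for
   every psd [H] (perturb [P] to [P + t H]) and [<X - P, P> = 0] (rescale [P]). *)
Lemma proj_psd_compl X : sym_mx X ->
  psd (proj_psd X - X) /\ (proj_psd X - X) *m proj_psd X = 0.
Proof.
move=> sX; have [pP Pmin] := proj_psdP sX; set P := proj_psd X in pP Pmin *.
set E := X - P.
have EH_le0 H : psd H -> frob_dot E H <= 0.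
  move=> pH; apply: (linear_coef_le0 (frob_dot_ge0 H)) => t t_gt0 _.
  have := Pmin _ (psdD pP (psdZ (ltW t_gt0) pH)); rewrite !frob2E -/E.
  have -> : X - (P + t *: H) = E + (- t) *: H by rewrite /E scaleNr opprD addrA.
  rewrite frob_dot_expand; nra.
have EP_ge0 : 0 <= frob_dot E P.
  rewrite -oppr_le0; apply: (linear_coef_le0 (frob_dot_ge0 P)) => t t_gt0 t_lt1.
  have := Pmin ((1 - t) *: P) (psdZ _ pP); rewrite subr_ge0 ltW // !frob2E.
  have -> : X - (1 - t) *: P = E + t *: P.
    by apply/matrixP => i j; rewrite /E !mxE; ring.
  rewrite frob_dot_expand; nra.
have PXE : P - X = - E by rewrite opprB.
have pK : psd (P - X).
  split=> [|x]; first by rewrite /sym_mx linearB /= pP.1 sX.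
  by rewrite -frob_dot_rank1 PXE frob_dotNl oppr_ge0; apply/EH_le0/psd_rank1.
split=> //; apply: tr_psd_mul_eq0 => //.
rewrite -{1}pK.1 -frob_dotE PXE frob_dotNl.
by apply/eqP; rewrite oppr_eq0 eq_le EH_le0.
Qed.

End PsdProjection.

Section Sandwich.
Variables (R : realType) (p : nat).
Implicit Types (S M N : 'M[R]_p).

Lemma sandwichD S M N : S *m (M + N) *m S = S *m M *m S + S *m N *m S.
Proof. by rewrite mulmxDr mulmxDl. Qed.

Lemma sandwichZ S a M : S *m (a *: M) *m S = a *: (S *m M *m S).
Proof. by rewrite -scalemxAr -scalemxAl. Qed.

Lemma sandwichB S M N : S *m (M - N) *m S = S *m M *m S - S *m N *m S.
Proof. by rewrite mulmxBr mulmxBl. Qed.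

Lemma sandwichK S M : S \in unitmx -> S *m (invmx S *m M *m invmx S) *m S = M.
Proof. by move=> uS; rewrite !mulmxA (mulmxV uS) mul1mx (mulmxKV uS). Qed.

Lemma sandwichVK S M : S \in unitmx -> invmx S *m (S *m M *m S) *m invmx S = M.
Proof. by move=> uS; rewrite !mulmxA (mulVmx uS) mul1mx (mulmxK uS). Qed.

Lemma logdet_sandwich S M : S \in unitmx -> pd M ->
  logdet (S *m M *m S) = ln (\det S ^+ 2) + logdet M.
Proof.
move=> uS pM; have detS : \det S != 0 by rewrite -unitfE -unitmxE.
rewrite /logdet !det_mulmx mulrAC -expr2 lnM ?posrE ?pd_det_gt0 //.
by rewrite exprn_even_gt0.
Qed.

End Sandwich.

Section Problem.
Variables (R : realType) (p : nat) (ki kj : R).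
Hypotheses (ki_gt0 : 0 < ki) (kj_gt0 : 0 < kj).
Implicit Types (A B Y S M K P : 'M[R]_p).

Lemma feasibleE A B Y : feasible ki kj A B Y <->
  [/\ psd Y, pd (A - ki^-1 *: Y) & pd (B + kj^-1 *: Y)].
Proof.
have kiA : ki *: A - Y = ki *: (A - ki^-1 *: Y).
  by rewrite scalerBr scalerA mulfV ?gt_eqF // scale1r.
have kjB : Y - - (kj *: B) = kj *: (B + kj^-1 *: Y).
  by rewrite opprK scalerDr scalerA mulfV ?gt_eqF // scale1r addrC.
rewrite /feasible /loewner_lt kiA kjB.
have pdZV a M : 0 < a -> pd (a *: M) -> pd M.
  move=> a_gt0 /(pdZ (_ : 0 < a^-1)).
  by rewrite scalerA mulVf ?gt_eqF // scale1r invr_gt0; apply.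
split=> [[pY [pB pA]]|[pY pA pB]].
  by split=> //; [exact: pdZV pA | exact: pdZV pB].
by split=> //; split; apply: pdZ.
Qed.

Lemma pd_of_feasible A B Y : sym_mx A -> feasible ki kj A B Y -> pd A.
Proof.
move=> sA /feasibleE[[_ Y_ge0] [_ AY_gt0] _]; split=> // x x0.
have := AY_gt0 x x0; rewrite qformB qformZ; have := Y_ge0 x.
have : 0 < ki^-1 by rewrite invr_gt0.
nra.
Qed.

Lemma feasible_sandwich S A B Y : S^T = S -> S \in unitmx ->
  feasible ki kj A B Y -> feasible ki kj (S *m A *m S) (S *m B *m S) (S *m Y *m S).
Proof.
move=> sS uS /feasibleE[pY pA pB]; apply/feasibleE; split; first exact: psd_congr.
  by rewrite -sandwichZ -sandwichB; apply: pd_congr.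
by rewrite -sandwichZ -sandwichD; apply: pd_congr.
Qed.

Lemma objective_sandwich S A B Y : S \in unitmx -> feasible ki kj A B Y ->
  objective ki kj (S *m A *m S) (S *m B *m S) (S *m Y *m S) =
  objective ki kj A B Y + (ki + kj) * ln (\det S ^+ 2).
Proof.
move=> uS /feasibleE[_ pA pB].
by rewrite /objective -!sandwichZ -sandwichB -sandwichD !logdet_sandwich //; ring.
Qed.

Lemma objective_le_first_order A B Y0 Y :
  feasible ki kj A B Y0 -> feasible ki kj A B Y ->
  objective ki kj A B Y <= objective ki kj A B Y0 +
    \tr ((invmx (B + kj^-1 *: Y0) - invmx (A - ki^-1 *: Y0)) *m (Y - Y0)).
Proof.
move=> /feasibleE[_ pA0 pB0] /feasibleE[_ pA pB].
have := logdet_concave pA pA0; have := logdet_concave pB pB0.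
have -> : A - ki^-1 *: Y - (A - ki^-1 *: Y0) = - ki^-1 *: (Y - Y0).
  by apply/matrixP => i j; rewrite !mxE; ring.
have -> : B + kj^-1 *: Y - (B + kj^-1 *: Y0) = kj^-1 *: (Y - Y0).
  by apply/matrixP => i j; rewrite !mxE; ring.
rewrite -!scalemxAr !mxtraceZ /objective mulmxBl linearB /=.
move=> /(ler_wpM2l (ltW kj_gt0)) hB /(ler_wpM2l (ltW ki_gt0)) hA.
move: hA hB; rewrite !mulrDr !mulrA mulrN mulfV ?gt_eqF // mulfV ?gt_eqF //.
lra.
Qed.

End Problem.

Section Complementarity.
Variables (R : realType) (p : nat).
Implicit Types (M K P : 'M[R]_p).

(* On an eigenvector [u] of [P] with eigenvalue [e != 0], [K P = 0] forces
   [K u = 0], so the eigenvalue [a + b e] is the value of the given form at [u]. *)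
Lemma pd_affine_of_compl a b P K : 0 < a -> sym_mx P -> K *m P = 0 ->
  pd (a *: 1%:M + b *: P + K) -> pd (a *: 1%:M + b *: P).
Proof.
move=> a_gt0 sP KP [_ pos]; have [U [e [oU eP]]] := sym_spectral_decomp sP; subst P.
rewrite -spectral_mx_affine //; apply: pd_spectral_mx => // i; rewrite mxE.
have [->|e_neq0] := eqVneq (e 0 i) 0; first by rewrite mulr0 addr0.
set u := (row i U)^T; have Pu := spectral_mx_row e i oU.
have Ku : K *m u = 0.
  have : e 0 i *: (K *m u) = 0 by rewrite scalemxAr -Pu mulmxA KP mul0mx.
  by move/eqP; rewrite scaler_eq0 (negPf e_neq0) => /eqP.
have qK : qform K u = 0 by rewrite /qform -mulmxA Ku mulmx0 mxE.
have := pos u (orthmx_row_neq0 i oU).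
by rewrite !qformD !qformZ (qform_eigenvector Pu) qK qform1_row // !mulr1 addr0.
Qed.

Lemma invmx_addr_compl M K : pd M -> pd (M + K) -> K *m M = K ->
  invmx (M + K) - invmx M = - (invmx (M + K) *m K).
Proof.
move=> pM pN KM; have uM := pd_unitmx pM; have uN := pd_unitmx pN.
have KMi : K *m invmx M = K by rewrite -{1}KM (mulmxK uM).
have -> : invmx (M + K) - invmx M = invmx (M + K) *m (M - (M + K)) *m invmx M.
  by rewrite mulmxBr mulmxBl (mulmxK uM) (mulVmx uN) mul1mx.
by rewrite opprD addrA subrr sub0r mulmxN mulNmx -mulmxA KMi.
Qed.

Lemma psd_invmx_mul_compl M K : pd (M + K) -> psd K -> K *m M = K ->
  psd (invmx (M + K) *m K).
Proof.
move=> pN pK KM; have uN := pd_unitmx pN.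
have -> : invmx (M + K) *m K = invmx (M + K) *m (K + K^T *m K) *m invmx (M + K).
  have KN : K + K *m K = K *m (M + K) by rewrite mulmxDr KM.
  by rewrite pK.1 KN mulmxA (mulmxK uN).
by apply: psd_congr; [exact/sym_invmx/pN.1 | exact/psdD/psd_gram].
Qed.

End Complementarity.

Section Normalized.
Variables (R : realType) (p : nat) (ki kj : R).
Hypotheses (ki_gt0 : 0 < ki) (kj_gt0 : 0 < kj).
Variable B : 'M[R]_p.
Hypothesis sB : sym_mx B.

Let X := 1%:M - B.
Let P := proj_psd X.
Let K := P - X.
Let a := kj / (ki + kj).
Let M := 1%:M - a *: P.
Let Ys := (ki * kj / (ki + kj)) *: P.

Let symX : sym_mx X. Proof. by rewrite /sym_mx linearB /= trmx1 sB. Qed.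
Let psdP : psd P. Proof. exact: (proj_psdP symX).1. Qed.
Let psdK : psd K. Proof. exact: (proj_psd_compl symX).1. Qed.
Let KP : K *m P = 0. Proof. exact: (proj_psd_compl symX).2. Qed.
Let KM : K *m M = K.
Proof. by rewrite /M mulmxBr mulmx1 -scalemxAr KP scaler0 subr0. Qed.
Let kk_neq0 : ki + kj != 0. Proof. by rewrite gt_eqF // addr_gt0. Qed.

(* Feasibility gives [ki I + kj B = (ki + kj) I - kj P + kj K > 0]. *)
Lemma pd_normalized_logdet_arg Y0 : feasible ki kj 1%:M B Y0 -> pd M.
Proof.
move=> [_ [pB0 pA0]]; rewrite /loewner_lt opprK in pB0 pA0.
have pdB : pd ((ki + kj) *: 1%:M + (- kj) *: P + kj *: K).
  have -> : (ki + kj) *: 1%:M + (- kj) *: P + kj *: K = ki *: 1%:M - Y0 + (Y0 + kj *: B).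
    by apply/matrixP => i j; rewrite /K /P /X !mxE; ring.
  exact/pdD_psd/pd_psd.
have -> : M = (ki + kj)^-1 *: ((ki + kj) *: 1%:M + - kj *: P).
  by apply/matrixP => i j; rewrite /M /a !mxE; field.
apply: pdZ; first by rewrite invr_gt0 addr_gt0.
apply: pd_affine_of_compl pdB; [exact: addr_gt0 | exact: psdP.1 |].
by rewrite -scalemxAl KP scaler0.
Qed.

Lemma normalized_logdet_args :
  1%:M - ki^-1 *: Ys = M /\ B + kj^-1 *: Ys = M + K.
Proof.
split; apply/matrixP => i j; rewrite /Ys /M /a /K /X !mxE; field.
  by rewrite kk_neq0 gt_eqF.
by rewrite kk_neq0 gt_eqF.
Qed.

Lemma normalized_optimum : (exists Y0, feasible ki kj 1%:M B Y0) ->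
  feasible ki kj 1%:M B Ys /\
  forall Y, feasible ki kj 1%:M B Y ->
    objective ki kj 1%:M B Y <= objective ki kj 1%:M B Ys.
Proof.
move=> [Y0 /pd_normalized_logdet_arg pM]; have pN := pdD_psd pM psdK.
have [YsM YsN] := normalized_logdet_args.
have fYs : feasible ki kj 1%:M B Ys.
  apply/(feasibleE ki_gt0 kj_gt0); split; rewrite ?YsM ?YsN //.
  apply: psdZ psdP; apply/ltW/divr_gt0; [exact: mulr_gt0 | exact: addr_gt0].
split=> // Y fY; apply: le_trans (objective_le_first_order ki_gt0 kj_gt0 fYs fY) _.
rewrite gerDl YsM YsN invmx_addr_compl // mulNmx linearN /= oppr_le0.
have LYs : invmx (M + K) *m K *m Ys = 0.
  by rewrite /Ys -scalemxAr -mulmxA KP mulmx0 scaler0.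
rewrite mulmxBr LYs subr0.
exact: tr_psd_mul_ge0 (psd_invmx_mul_compl pN psdK KM) fY.1.
Qed.

End Normalized.

Theorem proposition3p1 (R : realType) (p : nat) (hp : (1 <= p)%N)
  (ki kj : R) (hki : 0 < ki) (hkj : 0 < kj)
  (A B : 'M[R]_p) (hA : sym_mx A) (hB : sym_mx B)
  (hfeas : exists Y : 'M[R]_p, feasible ki kj A B Y) :
  let Ystar := (ki * kj / (ki + kj)) *:
      (msqrt A *m proj_psd (1%:M - minvsqrt A *m B *m minvsqrt A) *m msqrt A) in
  pd A /\ feasible ki kj A B Ystar /\
  (forall Y : 'M[R]_p, feasible ki kj A B Y ->
     objective ki kj A B Y <= objective ki kj A B Ystar).
Proof.
move=> Ystar; rewrite {}/Ystar /minvsqrt -sandwichZ.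
have [Y0 fY0] := hfeas; have pA := pd_of_feasible hki hkj hA fY0.
have [pS SS] := msqrtP pA; set S := msqrt A in pS SS *; set T := invmx S.
have [sS uS] : S^T = S /\ S \in unitmx by split; [exact: pS.1 | exact: pd_unitmx].
have [sT uT] : T^T = T /\ T \in unitmx by split; [exact: sym_invmx | rewrite unitmx_inv].
have AE : A = S *m 1%:M *m S by rewrite mulmx1.
have BE : B = S *m (T *m B *m T) *m S by rewrite sandwichK.
have fT Y : feasible ki kj A B Y -> feasible ki kj 1%:M (T *m B *m T) (T *m Y *m T).
  by move/(feasible_sandwich hki hkj sT uT); rewrite {1}AE sandwichVK.
have sB' : sym_mx (T *m B *m T) by apply: sym_congr.
have [fYs Ysmax] := normalized_optimum hki hkj sB' (ex_intro _ _ (fT _ fY0)).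
split=> //; split=> [|Y fY]; first by rewrite {1}AE {1}BE; exact: feasible_sandwich.
have fTY := fT _ fY.
rewrite -(sandwichK Y uS) AE {1 2}BE !(objective_sandwich hki hkj) //.
by rewrite lerD2r; exact: Ysmax.
Qed.
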